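(* Let $A\subseteq B\subseteq C$ be modules in $\mathcal G$ such that $A$ is a strict subobject of $B$ and $B$ is a strict subobject of $C$. Then $A$ is a strict subobject of $C$. Equivalently, a composition of cofibrations is a cofibration.
   Context: Let $\Lambda$ be a finite dimensional algebra over a field and $\mathrm{mod}\text-\Lambda$ the category of finitely generated right $\Lambda$-modules. Fix a torsion class $\mathcal G\subseteq\mathrm{mod}\text-\Lambda$, i.e. a class of modules closed under isomorphisms, extensions and quotients. For $B\in\mathcal G$, a subobject of $B$ is a submodule of $B$ that lies in $\mathcal G$ (including $0$ and $B$). A subobject $A\subseteq B$ is a strict subobject if $A\cap B'\in\mathcal G$ for every subobject $B'$ of $B$. A monomorphism whose image is a strict subobject is called a cofibration. *)

From HB Require Import structures.
From mathcomp Require Import all_boot all_order all_algebra all_field.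
Set Implicit Arguments. Unset Strict Implicit. Unset Printing Implicit Defensive.
Import GRing.Theory.
Local Open Scope ring_scope.

(* Lambda : a finite dimensional K-algebra (falgType K).
   A finitely generated right Lambda-module = finite dimensional K-vector space
   K^n (row vectors) with a right action v . x := v *m ract x. *)
Section Defs.
Variables (K : fieldType) (Lam : falgType K).

Record rmod := RMod {
  rdim : nat;
  ract : Lam -> 'M[K]_rdim;
  ract_linear : forall (a : K) (x y : Lam), ract (a *: x + y) = a *: ract x + ract y;
  ract1 : ract 1 = 1%:M;
  ractM : forall x y : Lam, ract (x * y) = ract x *m ract y }.

Definition is_hom (M N : rmod) (f : 'M[K]_(rdim M, rdim N)) : Prop :=
  forall x : Lam, ract M x *m f = f *m ract N x.

Definition torsion_class (G : rmod -> Prop) : Prop :=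
  (* closed under isomorphisms *)
  (forall (M N : rmod) (f : 'M[K]_(rdim M, rdim N)),
      is_hom f -> row_free f -> row_full f -> G M -> G N) /\
  (* closed under quotients (epimorphic images) *)
  (forall (M N : rmod) (f : 'M[K]_(rdim M, rdim N)),
      is_hom f -> row_full f -> G M -> G N) /\
  (* closed under extensions: 0 -> L0 -f-> M -g-> N -> 0 exact *)
  (forall (L0 M N : rmod) (f : 'M[K]_(rdim L0, rdim M)) (g : 'M[K]_(rdim M, rdim N)),
      is_hom f -> is_hom g -> row_free f -> row_full g ->
      (f == kermx g)%MS -> G L0 -> G N -> G M).

(* subspaces of a module M are row spaces of square matrices U *)
Definition submod (M : rmod) (U : 'M[K]_(rdim M)) : Prop :=
  forall x : Lam, (U *m ract M x <= U)%MS.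

(* the subspace U of M is (isomorphic to) a module in G *)
Definition inG (G : rmod -> Prop) (M : rmod) (U : 'M[K]_(rdim M)) : Prop :=
  exists (N : rmod) (f : 'M[K]_(rdim N, rdim M)),
    [/\ G N, is_hom f, row_free f & (f == U)%MS].

(* U is a subobject of V (both subspaces of the ambient module M) *)
Definition subobject (G : rmod -> Prop) (M : rmod) (V U : 'M[K]_(rdim M)) : Prop :=
  [/\ submod U, (U <= V)%MS & inG G U].

Definition strict_subobject (G : rmod -> Prop) (M : rmod) (V U : 'M[K]_(rdim M)) : Prop :=
  subobject G V U /\
  forall W : 'M[K]_(rdim M), subobject G V W -> inG G (U :&: W)%MS.

End Defs.

From HB Require Import structures.
From mathcomp Require Import all_boot all_order all_algebra all_field.
Local Open Scope ring_scope.

(* For a subobject W of C, the intersection B ∩ W lies in G because B is strict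
   in C; it is a subobject of B, so A ∩ (B ∩ W) lies in G because A is strict in
   B; and since A ⊆ B this intersection is just A ∩ W. *)

Section StrictSubobjects.
Variables (K : fieldType) (Lam : falgType K) (G : rmod Lam -> Prop) (C : rmod Lam).
Implicit Types A B U V W : 'M[K]_(rdim C).

Lemma inG_eqmx U V : (U == V)%MS -> inG G U -> inG G V.
Proof.
move=> /eqmxP eqUV [N [f [GN hom_f free_f /eqmxP eq_fU]]].
by exists N, f; split=> //; apply/eqmxP; apply: eqmx_trans eq_fU eqUV.
Qed.

Lemma submod_cap U V : submod U -> submod V -> submod (U :&: V)%MS.
Proof.
move=> modU modV x; rewrite sub_capmx.
by rewrite (submx_trans (submxMr _ (capmxSl U V)) (modU x))
           (submx_trans (submxMr _ (capmxSr U V)) (modV x)).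
Qed.

Lemma subobject1 V U : subobject G V U -> subobject G 1%:M U.
Proof. by case=> modU _ inGU; split=> //; apply: submx1. Qed.

Lemma subobject_cap V W :
  submod V -> inG G (V :&: W)%MS -> subobject G 1%:M W ->
  subobject G V (V :&: W)%MS.
Proof.
by move=> modV inGVW [modW _ _]; split=> //; [apply: submod_cap | apply: capmxSl].
Qed.

Lemma capmxA_absorb U V W : (U <= V)%MS -> (U :&: (V :&: W) == U :&: W)%MS.
Proof.
move=> UV; apply/andP; split; rewrite !sub_capmx capmxSl /=.
  by rewrite (submx_trans (capmxSr _ _) (capmxSr _ _)).
by rewrite (submx_trans (capmxSl _ _) UV) capmxSr.
Qed.

Lemma strict_subobject_trans A B :
  strict_subobject G B A -> strict_subobject G 1%:M B ->
  strict_subobject G 1%:M A.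
Proof.
move=> [[modA AB inGA] strictA] [[modB _ _] strictB].
split=> [|W subW]; first exact: subobject1 (And3 modA AB inGA).
have inGBW := strictB W subW.
move: (capmxA_absorb _ _ W AB) => /inG_eqmx; apply; apply: strictA.
exact: subobject_cap.
Qed.

End StrictSubobjects.

(* The argument never uses the closure properties of G, nor G C. *)
Theorem mainTheorem1 (K : fieldType) (Lam : falgType K) (G : rmod Lam -> Prop)
  (C : rmod Lam) (A B : 'M[K]_(rdim C)) :
  torsion_class G -> G C ->
  strict_subobject G B A ->
  strict_subobject G 1%:M B ->
  strict_subobject G 1%:M A.
Proof. by move=> _ _; apply: strict_subobject_trans. Qed.
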